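(* Let $K$ be a field of characteristic $0$, let $L=\mathcal{L}(x,y)$ be the free Lie algebra over $K$ freely generated by $x,y$, let $\delta$ be the derivation of $L$ with $\delta(x)=0$, $\delta(y)=x$, and $L^\delta=\ker\delta$. If $f\in L^\delta$ has degree $6$, then $f$ belongs to the Lie subalgebra of $L$ generated by $x$, $[y,x]$ and $[y,x,y,[y,x,x]]$.
   Context: Brackets are left-normed: $[a_1,a_2,\ldots,a_n]=[[\ldots[a_1,a_2],\ldots],a_n]$; thus $[y,x,y,[y,x,x]]=[[[y,x],y],[[y,x],x]]$. *)

From HB Require Import structures.
From mathcomp Require Import all_boot all_order all_algebra.
Set Implicit Arguments. Unset Strict Implicit. Unset Printing Implicit Defensive.
Import Order.TTheory GRing.Theory Num.Theory.
Local Open Scope ring_scope.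

(* Noncommutative formal power series over K in the two letters
   x := false, y := true.
   The free associative algebra K<x,y> sits inside it, and the free Lie
   algebra L(x,y) is realized (as usual) as the Lie subalgebra generated by
   x and y for the commutator bracket. *)
Definition ncs (K : fieldType) := seq bool -> K.

Section NCS.
Variable K : fieldType.

Definition ncs_add (p q : ncs K) : ncs K := fun w => p w + q w.
Definition ncs_scale (a : K) (p : ncs K) : ncs K := fun w => a * p w.
Definition ncs_mul (p q : ncs K) : ncs K :=
  fun w => \sum_(i < (size w).+1) p (take i w) * q (drop i w).
Definition ncs_br (p q : ncs K) : ncs K :=
  fun w => ncs_mul p q w - ncs_mul q p w.

Definition ncs_x : ncs K := fun w => if w == [:: false] then 1 else 0.
Definition ncs_y : ncs K := fun w => if w == [:: true] then 1 else 0.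

Inductive lie_closure (S : ncs K -> Prop) : ncs K -> Prop :=
  | lc_gen p : S p -> lie_closure S p
  | lc_add p q : lie_closure S p -> lie_closure S q -> lie_closure S (ncs_add p q)
  | lc_scale a p : lie_closure S p -> lie_closure S (ncs_scale a p)
  | lc_br p q : lie_closure S p -> lie_closure S q -> lie_closure S (ncs_br p q).

Definition free_lie (f : ncs K) : Prop :=
  lie_closure (fun p => p = ncs_x \/ p = ncs_y) f.

Definition homog (n : nat) (f : ncs K) : Prop := forall w, size w != n -> f w = 0.

(* d is a derivation of the Lie algebra L (values outside L are irrelevant) *)
Definition lie_derivation (d : ncs K -> ncs K) : Prop :=
  (forall p q, free_lie p -> free_lie q -> d (ncs_add p q) = ncs_add (d p) (d q)) /\
  (forall a p, free_lie p -> d (ncs_scale a p) = ncs_scale a (d p)) /\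
  (forall p q, free_lie p -> free_lie q ->
     d (ncs_br p q) = ncs_add (ncs_br (d p) q) (ncs_br p (d q))).

Definition ncs_zero : ncs K := fun _ => 0.
End NCS.

(* The degree 6 component of L(x,y) has a basis of nine Lie monomials whose
   first three, [y,x,x,x,x,x], [[y,x,x,x],[y,x]] and [y,x,y,[y,x,x]], lie in
   the Lie algebra generated by x, [y,x] and [y,x,y,[y,x,x]].  Since
   delta x = 0 and delta y = x, delta maps every monomial to an integer
   combination of monomials, so delta f = 0 is a linear system with integer
   coefficients in the nine coordinates of f.  Already the coefficients of six
   words of length 6 give a system whose integer combinations isolate each of
   the last six coordinates with a factor 1, 2, 3 or 4; in characteristic 0
   these coordinates therefore vanish.  That the nine monomials span the
   degree 6 component follows by induction on the elements of L, from
   explicit expansions of the bracket of two basis monomials of degrees i and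
   j in the basis of degree i + j.  All these integer identities are checked
   by computing coefficients of words. *)

From HB Require Import structures.
From mathcomp Require Import all_boot all_order all_algebra.
From Stdlib Require Import FunctionalExtensionality.
From mathcomp Require Import zify ring.
Set Implicit Arguments. Unset Strict Implicit. Unset Printing Implicit Defensive.
Import GRing.Theory.
Local Open Scope ring_scope.

Lemma intr_sum (R : pzRingType) (I : Type) (r : seq I) (F : I -> int) :
  ((\sum_(i <- r) F i)%:~R : R) = \sum_(i <- r) (F i)%:~R.
Proof. exact: (big_morph _ (@intrD R) (mulr0z 1)). Qed.

Lemma sum_indicator (R : pzSemiRingType) n k (F : nat -> R) :
  (k < n)%N -> \sum_(j < n) (j == k :> nat)%:R * F j = F k.
Proof.
move=> lt_kn; rewrite (bigD1 (Ordinal lt_kn)) //= eqxx mul1r big1 ?addr0 // => j.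
by rewrite -[j != _]/(nat_of_ord j != k) => /negbTE->; rewrite mul0r.
Qed.

Lemma subset_unzip2_zip (S T : eqType) (s : seq S) (t : seq T) :
  {subset unzip2 (zip s t) <= t}.
Proof.
elim: s t => [|x s IHs] [|y t] //= u; rewrite !inE => /orP [->|/IHs ->] //.
by rewrite orbT.
Qed.

Section SeriesAlgebra.
Variable K : fieldType.
Implicit Types (p q r : ncs K) (a : K) (w : seq bool).

Lemma ncs_mulDl p q r w : ncs_mul (ncs_add p q) r w = ncs_mul p r w + ncs_mul q r w.
Proof. by rewrite /ncs_mul -big_split; apply: eq_bigr => i _; rewrite mulrDl. Qed.

Lemma ncs_mulDr p q r w : ncs_mul r (ncs_add p q) w = ncs_mul r p w + ncs_mul r q w.
Proof. by rewrite /ncs_mul -big_split; apply: eq_bigr => i _; rewrite mulrDr. Qed.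

Lemma ncs_mulZl a p q w : ncs_mul (ncs_scale a p) q w = a * ncs_mul p q w.
Proof. by rewrite /ncs_mul mulr_sumr; apply: eq_bigr => i _; rewrite mulrA. Qed.

Lemma ncs_mulZr a p q w : ncs_mul q (ncs_scale a p) w = a * ncs_mul q p w.
Proof. by rewrite /ncs_mul mulr_sumr; apply: eq_bigr => i _; rewrite mulrCA. Qed.

Lemma ncs_brDl p q r : ncs_br (ncs_add p q) r = ncs_add (ncs_br p r) (ncs_br q r).
Proof.
by apply: functional_extensionality => w; rewrite /ncs_br ncs_mulDl ncs_mulDr /ncs_add; ring.
Qed.

Lemma ncs_brDr p q r : ncs_br r (ncs_add p q) = ncs_add (ncs_br r p) (ncs_br r q).
Proof.
by apply: functional_extensionality => w; rewrite /ncs_br ncs_mulDl ncs_mulDr /ncs_add; ring.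
Qed.

Lemma ncs_brZl a p q : ncs_br (ncs_scale a p) q = ncs_scale a (ncs_br p q).
Proof.
by apply: functional_extensionality => w; rewrite /ncs_br ncs_mulZl ncs_mulZr /ncs_scale; ring.
Qed.

Lemma ncs_brZr a p q : ncs_br q (ncs_scale a p) = ncs_scale a (ncs_br q p).
Proof.
by apply: functional_extensionality => w; rewrite /ncs_br ncs_mulZl ncs_mulZr /ncs_scale; ring.
Qed.

Lemma ncs_scale0 p : ncs_scale 0 p = ncs_zero K.
Proof. by apply: functional_extensionality => w; rewrite /ncs_scale mul0r. Qed.

Lemma ncs_br0l p : ncs_br (ncs_zero K) p = ncs_zero K.
Proof. by rewrite -{1}(ncs_scale0 p) ncs_brZl !ncs_scale0. Qed.

Lemma ncs_br0r p : ncs_br p (ncs_zero K) = ncs_zero K.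
Proof. by rewrite -{1}(ncs_scale0 p) ncs_brZr !ncs_scale0. Qed.

Lemma ncs_sum_closed (P : ncs K -> Prop) m (F : nat -> ncs K) :
  P (ncs_zero K) -> (forall p q, P p -> P q -> P (ncs_add p q)) ->
  (forall i, (i < m)%N -> P (F i)) -> P (fun w => \sum_(i < m) F i w).
Proof.
move=> P0 PD; elim: m => [|m IHm] PF.
  suff -> : (fun w => \sum_(i < 0) F i w) = ncs_zero K by [].
  by apply: functional_extensionality => w; rewrite big_ord0.
suff -> : (fun w => \sum_(i < m.+1) F i w) = ncs_add (fun w => \sum_(i < m) F i w) (F m).
  by apply: PD; [apply: IHm => i lt_im; apply: PF; lia | apply: PF].
by apply: functional_extensionality => w; rewrite big_ord_recr.
Qed.

Lemma lie_closure0 (S : ncs K -> Prop) p : S p -> lie_closure S (ncs_zero K).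
Proof. by move=> Sp; rewrite -(ncs_scale0 p); apply/lc_scale/lc_gen. Qed.

End SeriesAlgebra.

(** * Lie monomials and their coefficients *)

Inductive lterm := LX | LY | LBr of lterm & lterm.

Definition lterm_eq_dec : comparable lterm.
Proof. rewrite /comparable /decidable; decide equality. Defined.
HB.instance Definition _ := comparableMixin lterm_eq_dec.

Fixpoint ldeg (t : lterm) : nat :=
  if t is LBr a b then (ldeg a + ldeg b)%N else 1%N.

(* [\sum] is locked and would block [vm_compute]; [isum] is the unlocked sum. *)
Definition isum (n : nat) (F : nat -> int) : int :=
  foldr (fun i acc => F i + acc) 0 (iota 0 n).

Lemma isumE n F : isum n F = \sum_(i < n) F i.
Proof. by rewrite /isum -(big_mkord xpredT F) /index_iota subn0 unlock. Qed.

(* The degree test only prunes the recursion: the sum vanishes off degree anyway. *)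
Fixpoint lcoef (t : lterm) (w : seq bool) : int :=
  match t with
  | LX => if w == [:: false] then 1 else 0
  | LY => if w == [:: true] then 1 else 0
  | LBr a b =>
    if size w == (ldeg a + ldeg b)%N then
      isum (size w).+1 (fun i => lcoef a (take i w) * lcoef b (drop i w)
                                 - lcoef b (take i w) * lcoef a (drop i w))
    else 0
  end.

Definition pcoef (ps : seq (int * lterm)) (w : seq bool) : int :=
  foldr (fun p acc => p.1 * lcoef p.2 w + acc) 0 ps.

Lemma lcoef_homog t w : size w != ldeg t -> lcoef t w = 0.
Proof.
case: t => [||a b] /= w_deg; last by rewrite (negbTE w_deg).
by case: (w =P [:: false]) w_deg => // ->.
by case: (w =P [:: true]) w_deg => // ->.
Qed.

Lemma pcoef_homog n ps w :
  (forall p, p \in ps -> ldeg p.2 = n) -> size w != n -> pcoef ps w = 0.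
Proof.
move=> ps_deg w_n; elim: ps ps_deg => [|p ps IHps] //= ps_deg.
rewrite lcoef_homog ?ps_deg ?mem_head // mulr0 add0r.
by apply: IHps => q q_ps; apply: ps_deg; rewrite inE q_ps orbT.
Qed.

Lemma lcoef_split_eq0 a b w i : size w != (ldeg a + ldeg b)%N -> (i <= size w)%N ->
  lcoef a (take i w) * lcoef b (drop i w) = 0.
Proof.
move=> w_deg le_iw.
have [wa|] := eqVneq (size (take i w)) (ldeg a); last by move/lcoef_homog->; rewrite mul0r.
rewrite [lcoef b _]lcoef_homog ?mulr0 // size_drop.
by move: wa w_deg; rewrite size_takel //; lia.
Qed.

Fixpoint lterm_der (t : lterm) : seq (int * lterm) :=
  match t with
  | LX => [::]
  | LY => [:: (1, LX)]
  | LBr a b => [seq (p.1, LBr p.2 b) | p <- lterm_der a]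
               ++ [seq (p.1, LBr a p.2) | p <- lterm_der b]
  end.

Definition dcoef (t : lterm) : seq bool -> int := pcoef (lterm_der t).

Fixpoint words (n : nat) : seq (seq bool) :=
  if n is n'.+1 then [seq b :: w | b <- [:: false; true], w <- words n'] else [:: [::]].

Lemma mem_words n w : size w = n -> w \in words n.
Proof.
elim: n w => [|n IHn] [|b w] //= [/IHn w_n].
by case: b; rewrite /= !mem_cat ?(map_f _ w_n) ?orbT.
Qed.

Section Evaluation.
Variable K : fieldType.

Fixpoint leval (t : lterm) : ncs K :=
  match t with
  | LX => ncs_x K
  | LY => ncs_y K
  | LBr a b => ncs_br (leval a) (leval b)
  end.

Definition pcomb (ps : seq (int * lterm)) : ncs K :=
  foldr (fun p acc => ncs_add (ncs_scale p.1%:~R (leval p.2)) acc) (ncs_zero K) ps.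

Definition lcomb (c : nat -> K) (l : seq lterm) : ncs K :=
  fun w => \sum_(i < size l) c i * leval (nth LX l i) w.

Definition dcomb (c : nat -> K) (l : seq lterm) : ncs K :=
  fun w => \sum_(i < size l) c i * (dcoef (nth LX l i) w)%:~R.

Lemma leval_coef t w : leval t w = (lcoef t w)%:~R.
Proof.
elim: t w => [w|w|a IHa b IHb w] /=; first by rewrite /ncs_x; case: eqP.
  by rewrite /ncs_y; case: eqP.
rewrite /ncs_br /ncs_mul.
under eq_bigr => i _ do rewrite IHa IHb -intrM.
under [X in _ - X]eq_bigr => i _ do rewrite IHa IHb -intrM.
rewrite -!intr_sum -intrB -sumrB; case: ifP => [_|w_deg]; first by rewrite isumE.
rewrite big1 // => -[i /=]; rewrite ltnS => le_iw _.
by rewrite lcoef_split_eq0 ?w_deg // lcoef_split_eq0 ?subrr // addnC w_deg.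
Qed.

Lemma pcomb_coef ps w : pcomb ps w = (pcoef ps w)%:~R.
Proof.
by elim: ps => [|p ps IHps] //=; rewrite /ncs_add /ncs_scale IHps leval_coef intrD intrM.
Qed.

Lemma pcomb_cat ps qs : pcomb (ps ++ qs) = ncs_add (pcomb ps) (pcomb qs).
Proof.
apply: functional_extensionality => w; rewrite /ncs_add.
by elim: ps => [|p ps IHps] /=; rewrite /ncs_add ?IHps ?addrA // /ncs_zero add0r.
Qed.

Lemma ncs_br_pcombl ps b :
  ncs_br (pcomb ps) (leval b) = pcomb [seq (p.1, LBr p.2 b) | p <- ps].
Proof.
by elim: ps => [|p ps IHps] /=; rewrite ?ncs_br0l // ncs_brDl ncs_brZl IHps.
Qed.

Lemma ncs_br_pcombr ps a :
  ncs_br (leval a) (pcomb ps) = pcomb [seq (p.1, LBr a p.2) | p <- ps].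
Proof.
by elim: ps => [|p ps IHps] /=; rewrite ?ncs_br0r // ncs_brDr ncs_brZr IHps.
Qed.

End Evaluation.

Section Span.
Variable K : fieldType.

Inductive lspan (l : seq lterm) : ncs K -> Prop :=
  | lspan0 : lspan l (ncs_zero K)
  | lspan_gen t : t \in l -> lspan l (leval K t)
  | lspanD p q : lspan l p -> lspan l q -> lspan l (ncs_add p q)
  | lspanZ a p : lspan l p -> lspan l (ncs_scale a p).

Lemma lspan_pcomb l ps : {subset unzip2 ps <= l} -> lspan l (pcomb K ps).
Proof.
elim: ps => [|p ps IHps] /= ps_l; first exact: lspan0.
apply: lspanD; first by apply/lspanZ/lspan_gen/ps_l; rewrite mem_head.
by apply: IHps => t t_ps; apply: ps_l; rewrite inE t_ps orbT.
Qed.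

Lemma lspan_br l1 l2 l3 p q :
  {in l1 & l2, forall a b, lspan l3 (leval K (LBr a b))} ->
  lspan l1 p -> lspan l2 q -> lspan l3 (ncs_br p q).
Proof.
move=> br_l12 p_l1 q_l2; elim: p_l1 => [|a a_l1|p1 p2 _ IH1 _ IH2|c p1 _ IH].
- by rewrite ncs_br0l; apply: lspan0.
- elim: q_l2 => [|b b_l2|q1 q2 _ IH1 _ IH2|c q1 _ IH].
  + by rewrite ncs_br0r; apply: lspan0.
  + exact: br_l12.
  + by rewrite ncs_brDr; apply: lspanD.
  + by rewrite ncs_brZr; apply: lspanZ.
- by rewrite ncs_brDl; apply: lspanD.
- by rewrite ncs_brZl; apply: lspanZ.
Qed.

Definition hcomp (n : nat) (p : ncs K) : ncs K :=
  fun w => if size w == n then p w else 0.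

Lemma hcompD n p q : hcomp n (ncs_add p q) = ncs_add (hcomp n p) (hcomp n q).
Proof.
by apply: functional_extensionality => w; rewrite /hcomp /ncs_add; case: ifP; rewrite ?addr0.
Qed.

Lemma hcompZ n a p : hcomp n (ncs_scale a p) = ncs_scale a (hcomp n p).
Proof.
by apply: functional_extensionality => w; rewrite /hcomp /ncs_scale; case: ifP; rewrite ?mulr0.
Qed.

Lemma hcomp_mul n p q w :
  hcomp n (ncs_mul p q) w = \sum_(i < n.+1) ncs_mul (hcomp i p) (hcomp (n - i) q) w.
Proof.
rewrite /ncs_mul exchange_big /= /hcomp; case: eqP => [w_n|w_n].
  apply: eq_bigr => -[k /=]; rewrite ltnS => le_kw _.
  rewrite size_takel // size_drop.
  have lt_kn : (k < n.+1)%N by rewrite -w_n ltnS.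
  rewrite (bigD1 (Ordinal lt_kn)) //= eqxx w_n eqxx big1 ?addr0 // => -[i lt_in].
  by rewrite -val_eqE /= eq_sym => /negbTE->; rewrite mul0r.
symmetry; apply: big1 => -[k /=]; rewrite ltnS => le_kw _; apply: big1 => -[i lt_in] _ /=.
rewrite size_takel // size_drop.
case: eqP => [ik|]; last by rewrite mul0r.
by case: eqP => [|]; [lia | rewrite mulr0].
Qed.

Lemma hcomp_br n p q :
  hcomp n (ncs_br p q) = fun w => \sum_(i < n.+1) ncs_br (hcomp i p) (hcomp (n - i) q) w.
Proof.
apply: functional_extensionality => w.
have -> : hcomp n (ncs_br p q) w = hcomp n (ncs_mul p q) w - hcomp n (ncs_mul q p) w.
  by rewrite /hcomp /ncs_br; case: ifP; rewrite ?subr0.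
rewrite !hcomp_mul /ncs_br sumrB; congr (_ - _).
rewrite [RHS](reindex_inj rev_ord_inj) /=; apply: eq_bigr => -[i /=]; rewrite ltnS => le_in _.
by rewrite subSS subKn.
Qed.

Lemma hcomp_leval n t :
  hcomp n (leval K t) = if n == ldeg t then leval K t else ncs_zero K.
Proof.
apply: functional_extensionality => w; rewrite /hcomp.
case: ifP => [/eqP <- | /negbT w_n]; case: ifP => [/eqP t_deg | /negbT t_deg] //.
  by rewrite leval_coef lcoef_homog.
by rewrite leval_coef lcoef_homog // -t_deg.
Qed.

Lemma free_lie_leval t : free_lie (leval K t).
Proof.
elim: t => [||a IHa b IHb] /=; last exact: lc_br.
  by apply: lc_gen; left.
by apply: lc_gen; right.
Qed.

Lemma free_lie_lspan l (p : ncs K) : lspan l p -> free_lie p.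
Proof.
elim=> [|t _|p1 p2 _ IH1 _ IH2|a p1 _ IH]; last exact: lc_scale.
- by apply: (@lie_closure0 _ _ (ncs_x K)); left.
- exact: free_lie_leval.
- exact: lc_add.
Qed.

End Span.

(** * A basis of L in degrees at most 6 *)

Definition basis_table : seq (seq lterm) :=
  [::
  [:: LX; LY];
  [:: (LBr LX LY)];
  [:: (LBr LX (LBr LX LY)); (LBr (LBr LX LY) LY)];
  [:: (LBr LX (LBr LX (LBr LX LY)));
      (LBr LX (LBr (LBr LX LY) LY));
      (LBr (LBr (LBr LX LY) LY) LY)];
  [:: (LBr LX (LBr LX (LBr LX (LBr LX LY))));
      (LBr LX (LBr LX (LBr (LBr LX LY) LY)));
      (LBr (LBr LX (LBr LX LY)) (LBr LX LY));
      (LBr LX (LBr (LBr (LBr LX LY) LY) LY));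
      (LBr (LBr LX LY) (LBr (LBr LX LY) LY));
      (LBr (LBr (LBr (LBr LX LY) LY) LY) LY)];
  [:: (LBr (LBr (LBr (LBr (LBr LY LX) LX) LX) LX) LX);
      (LBr (LBr (LBr (LBr LY LX) LX) LX) (LBr LY LX));
      (LBr (LBr (LBr LY LX) LY) (LBr (LBr LY LX) LX));
      (LBr LX (LBr LX (LBr LX (LBr (LBr LX LY) LY))));
      (LBr LX (LBr LX (LBr (LBr (LBr LX LY) LY) LY)));
      (LBr LX (LBr (LBr LX LY) (LBr (LBr LX LY) LY)));
      (LBr LX (LBr (LBr (LBr (LBr LX LY) LY) LY) LY));
      (LBr (LBr LX LY) (LBr (LBr (LBr LX LY) LY) LY));
      (LBr (LBr (LBr (LBr (LBr LX LY) LY) LY) LY) LY)]].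

Definition basis (n : nat) : seq lterm :=
  if n is n'.+1 then nth [::] basis_table n' else [::].

(* [br_cert i j a b] lists the coordinates of the bracket of the [a]-th basis
   monomial of degree [i] with the [b]-th one of degree [j] in the basis of
   degree [i + j]. *)
Definition br_table : seq (seq (seq (seq (seq int)))) :=
  [:: [:: [:: [:: [:: 0]; [:: 1]]; [:: [:: -1]; [:: 0]]];
          [:: [:: [:: 1; 0]]; [:: [:: 0; -1]]];
          [:: [:: [:: 1; 0; 0]; [:: 0; 1; 0]]; [:: [:: 0; -1; 0]; [:: 0; 0; -1]]];
          [:: [:: [:: 1; 0; 0; 0; 0; 0]; [:: 0; 1; 0; 0; 0; 0]; [:: 0; 0; 0; 1; 0; 0]];
              [:: [:: 0; -1; 1; 0; 0; 0]; [:: 0; 0; 0; -1; -1; 0]; [:: 0; 0; 0; 0; 0; -1]]];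
          [:: [:: [:: -1; 0; 0; 0; 0; 0; 0; 0; 0];
                  [:: 0; 0; 0; 1; 0; 0; 0; 0; 0];
                  [:: 0; 1; 0; 0; 0; 0; 0; 0; 0];
                  [:: 0; 0; 0; 0; 1; 0; 0; 0; 0];
                  [:: 0; 0; 0; 0; 0; 1; 0; 0; 0];
                  [:: 0; 0; 0; 0; 0; 0; 1; 0; 0]];
              [:: [:: 0; 2; 0; -1; 0; 0; 0; 0; 0];
                  [:: 0; 0; 1; 0; -1; -2; 0; 0; 0];
                  [:: 0; 0; -2; 0; 0; 1; 0; 0; 0];
                  [:: 0; 0; 0; 0; 0; 0; -1; -1; 0];
                  [:: 0; 0; 0; 0; 0; 0; 0; -1; 0];
                  [:: 0; 0; 0; 0; 0; 0; 0; 0; -1]]]];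
      [:: [:: [:: [:: -1; 0]; [:: 0; 1]]];
          [:: [:: [:: 0; 0; 0]]];
          [:: [:: [:: 0; 0; -1; 0; 0; 0]; [:: 0; 0; 0; 0; 1; 0]]];
          [:: [:: [:: 0; -1; 0; 0; 0; 0; 0; 0; 0];
                  [:: 0; 0; -1; 0; 0; 1; 0; 0; 0];
                  [:: 0; 0; 0; 0; 0; 0; 0; 1; 0]]]];
      [:: [:: [:: [:: -1; 0; 0]; [:: 0; 1; 0]]; [:: [:: 0; -1; 0]; [:: 0; 0; 1]]];
          [:: [:: [:: 0; 0; 1; 0; 0; 0]]; [:: [:: 0; 0; 0; 0; -1; 0]]];
          [:: [:: [:: 0; 0; 0; 0; 0; 0; 0; 0; 0]; [:: 0; 0; 1; 0; 0; 0; 0; 0; 0]];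
              [:: [:: 0; 0; -1; 0; 0; 0; 0; 0; 0]; [:: 0; 0; 0; 0; 0; 0; 0; 0; 0]]]];
      [:: [:: [:: [:: -1; 0; 0; 0; 0; 0]; [:: 0; 1; -1; 0; 0; 0]];
              [:: [:: 0; -1; 0; 0; 0; 0]; [:: 0; 0; 0; 1; 1; 0]];
              [:: [:: 0; 0; 0; -1; 0; 0]; [:: 0; 0; 0; 0; 0; 1]]];
          [:: [:: [:: 0; 1; 0; 0; 0; 0; 0; 0; 0]];
              [:: [:: 0; 0; 1; 0; 0; -1; 0; 0; 0]];
              [:: [:: 0; 0; 0; 0; 0; 0; 0; -1; 0]]]];
      [:: [:: [:: [:: 1; 0; 0; 0; 0; 0; 0; 0; 0]; [:: 0; -2; 0; 1; 0; 0; 0; 0; 0]];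
              [:: [:: 0; 0; 0; -1; 0; 0; 0; 0; 0]; [:: 0; 0; -1; 0; 1; 2; 0; 0; 0]];
              [:: [:: 0; -1; 0; 0; 0; 0; 0; 0; 0]; [:: 0; 0; 2; 0; 0; -1; 0; 0; 0]];
              [:: [:: 0; 0; 0; 0; -1; 0; 0; 0; 0]; [:: 0; 0; 0; 0; 0; 0; 1; 1; 0]];
              [:: [:: 0; 0; 0; 0; 0; -1; 0; 0; 0]; [:: 0; 0; 0; 0; 0; 0; 0; 1; 0]];
              [:: [:: 0; 0; 0; 0; 0; 0; -1; 0; 0]; [:: 0; 0; 0; 0; 0; 0; 0; 0; 1]]]]].

Definition br_cert (i j : nat) (a b : nat) : seq int :=
  nth [::] (nth [::] (nth [::] (nth [::] br_table i.-1) j.-1) a) b.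

Definition br_check : bool :=
  all (fun i => all (fun j =>
    all (fun a => all (fun b =>
      all (fun w => lcoef (LBr (nth LX (basis i) a) (nth LX (basis j) b)) w
                    == pcoef (zip (br_cert i j a b) (basis (i + j))) w)
        (words (i + j)))
      (iota 0 (size (basis j)))) (iota 0 (size (basis i))))
    (iota 1 (6 - i))) (iota 1 5).

Definition basis_deg_check : bool :=
  all (fun n => all (fun t => ldeg t == n) (basis n)) (iota 1 6).

Lemma br_checkP : br_check. Proof. by vm_compute. Qed.
Lemma basis_deg_checkP : basis_deg_check. Proof. by vm_compute. Qed.

Lemma basis_deg n t : t \in basis n -> ldeg t = n.
Proof.
have [n_small|n_large] := leqP n 6; last first.
  by case: n n_large => // n n_large; rewrite /basis nth_default //; lia.
case: n n_small => // n n_small t_n.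
have /allP/(_ n.+1) := basis_deg_checkP; rewrite mem_iota => /(_ ltac:(lia)).
by move/allP/(_ t t_n)/eqP.
Qed.

Lemma basis_br (K : fieldType) i j a b : (i + j <= 6)%N ->
  a \in basis i -> b \in basis j -> lspan (basis (i + j)) (leval K (LBr a b)).
Proof.
move=> le_ij6 a_i b_j.
have i_gt0 : (0 < i)%N by case: i a_i {le_ij6}.
have j_gt0 : (0 < j)%N by case: j b_j {le_ij6}.
set cert := zip (br_cert i j (index a (basis i)) (index b (basis j))) (basis (i + j)).
have cert_basis : {subset unzip2 cert <= basis (i + j)} by apply: subset_unzip2_zip.
suff -> : leval K (LBr a b) = pcomb K cert by apply: lspan_pcomb.
apply: functional_extensionality => w; rewrite leval_coef pcomb_coef; congr (_%:~R).
have [w_ij|w_ij] := eqVneq (size w) (i + j)%N.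
  have iota_index t n : t \in basis n -> index t (basis n) \in iota 0 (size (basis n)).
    by rewrite mem_iota index_mem.
  have := br_checkP; rewrite /br_check.
  move=> /allP/(_ i)/[!mem_iota]/(_ ltac:(lia)) /allP/(_ j)/[!mem_iota]/(_ ltac:(lia)).
  move=> /allP/(_ _ (iota_index _ _ a_i)) /allP/(_ _ (iota_index _ _ b_j)).
  by rewrite !nth_index // => /allP/(_ w (mem_words w_ij))/eqP.
rewrite lcoef_homog /= ?(basis_deg a_i) ?(basis_deg b_j) //.
by rewrite (pcoef_homog (n := (i + j)%N)) // => p /(map_f snd)/cert_basis/basis_deg.
Qed.

Lemma free_lie_hcomp (K : fieldType) (p : ncs K) n :
  free_lie p -> (n <= 6)%N -> lspan (basis n) (hcomp n p).
Proof.
move=> p_L; elim: p_L n => {p} [p gen_p|p q _ IHp _ IHq|a p _ IHp|p q _ IHp _ IHq] n le_n6.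
- have gen_span t : t \in basis 1 -> lspan (basis n) (hcomp n (leval K t)).
    move=> t_1; rewrite hcomp_leval (basis_deg t_1).
    by case: eqP => [-> | _]; [exact: lspan_gen | exact: lspan0].
  by case: gen_p => ->; [apply: (gen_span LX) | apply: (gen_span LY)].
- by rewrite hcompD; apply: lspanD; [apply: IHp | apply: IHq].
- by rewrite hcompZ; apply/lspanZ/IHp.
rewrite hcomp_br; apply: (ncs_sum_closed (P := lspan (basis n))
  (F := fun i => ncs_br (hcomp i p) (hcomp (n - i) q))) => [|r s|i lt_in].
- exact: lspan0.
- exact: lspanD.
have le_in : (i <= n)%N by lia.
apply: (lspan_br (l1 := basis i) (l2 := basis (n - i))); [|apply: IHp; lia|apply: IHq; lia].
by move=> a b a_i b_ni; rewrite -(subnKC le_in); apply: basis_br => //; lia.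
Qed.

Section Derivation.
Variable K : fieldType.
Variable delta : ncs K -> ncs K.
Hypothesis delta_der : lie_derivation delta.
Hypothesis delta_x : delta (ncs_x K) = ncs_zero K.
Hypothesis delta_y : delta (ncs_y K) = ncs_x K.

Lemma delta0 : delta (ncs_zero K) = ncs_zero K.
Proof.
have x_L : free_lie (ncs_x K) by apply: lc_gen; left.
by rewrite -{1}(ncs_scale0 (ncs_x K)) delta_der.2.1 // ncs_scale0.
Qed.

Lemma delta_leval t : delta (leval K t) = pcomb K (lterm_der t).
Proof.
elim: t => [||a IHa b IHb] /=; first by rewrite delta_x.
  rewrite delta_y; apply: functional_extensionality => w.
  by rewrite /ncs_add /ncs_scale /ncs_zero mul1r addr0.
rewrite (delta_der.2.2 _ _ (free_lie_leval K a) (free_lie_leval K b)) IHa IHb.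
by rewrite ncs_br_pcombl ncs_br_pcombr pcomb_cat.
Qed.

Lemma lspan_coef l (p : ncs K) : lspan l p ->
  exists c, p = lcomb c l /\ delta p = dcomb c l.
Proof.
elim=> [|t t_l|p1 p2 p1_l [c1 [e1 d1]] p2_l [c2 [e2 d2]]|a p1 p1_l [c1 [e1 d1]]].
- exists (fun _ => 0); rewrite delta0.
  by split; apply: functional_extensionality => w;
    rewrite /lcomb /dcomb big1 // => i _; rewrite mul0r.
- have lt_tl : (index t l < size l)%N by rewrite index_mem.
  exists (fun j => (j == index t l)%:R); rewrite delta_leval.
  split; apply: functional_extensionality => w.
    by rewrite /lcomb (sum_indicator (fun j => leval K (nth LX l j) w)) // nth_index.
  rewrite /dcomb (sum_indicator (fun j => (dcoef (nth LX l j) w)%:~R)) //.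
  by rewrite nth_index // pcomb_coef.
- have [p1_L p2_L] := (free_lie_lspan p1_l, free_lie_lspan p2_l).
  exists (fun j => c1 j + c2 j); rewrite delta_der.1 // d1 d2 e1 e2.
  by split; apply: functional_extensionality => w;
    rewrite /ncs_add /lcomb /dcomb -big_split; apply: eq_bigr => j _; rewrite mulrDl.
- have p1_L := free_lie_lspan p1_l.
  exists (fun j => a * c1 j); rewrite delta_der.2.1 // d1 e1.
  by split; apply: functional_extensionality => w;
    rewrite /ncs_scale /lcomb /dcomb mulr_sumr; apply: eq_bigr => j _; rewrite mulrA.
Qed.

End Derivation.

(** * The kernel of delta in degree 6 *)

Lemma coef_eq0_of_certificate (K : fieldType) m n (M : nat -> nat -> int)
    (lam : nat -> int) (N : int) (c : nat -> K) k :
  (N%:~R : K) != 0 -> (k < n)%N ->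
  (forall e, (e < m)%N -> \sum_(i < n) c i * (M e i)%:~R = 0) ->
  (forall i, (i < n)%N -> \sum_(e < m) lam e * M e i = N * (i == k)%:R) ->
  c k = 0.
Proof.
move=> N_neq0 lt_kn M_c lam_M.
suff : (N%:~R : K) * c k = 0 by move/eqP; rewrite mulf_eq0 (negbTE N_neq0) => /eqP.
transitivity (\sum_(e < m) (lam e)%:~R * \sum_(i < n) c i * (M e i)%:~R); last first.
  by rewrite big1 // => e _; rewrite M_c ?mulr0.
under eq_bigr => e _ do rewrite mulr_sumr.
rewrite exchange_big /= -(sum_indicator (fun i => (N%:~R : K) * c i) lt_kn).
apply: eq_bigr => -[i lt_in] _ /=.
rewrite (eq_bigr (fun e : 'I_m => c i * (lam e * M e i)%:~R)) => [|e _]; last first.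
  by rewrite intrM mulrCA.
by rewrite -mulr_sumr -intr_sum lam_M // intrM natz -pmulrn; ring.
Qed.

Lemma intr_pchar0_neq0 (K : fieldType) (N : int) :
  [pchar K] =i pred0 -> N != 0 -> (N%:~R : K) != 0.
Proof.
move=> /pcharf0P charK0; case: N => n N_neq0.
  by change ((n%:R : K) != 0); rewrite charK0; apply: contra N_neq0 => /eqP ->.
by change (- (n.+1%:R : K) != 0); rewrite oppr_eq0 charK0.
Qed.

Definition test_words : seq (seq bool) :=
  [:: [:: false; false; false; false; false; true];
      [:: false; false; false; false; true; true];
      [:: false; false; false; true; false; true];
      [:: false; false; false; true; true; true];
      [:: false; false; true; true; false; true];
      [:: false; false; true; true; true; true]].

Definition der_matrix (e i : nat) : int :=
  dcoef (nth LX (basis 6) i) (nth [::] test_words e).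

(* The entry [(N, lam)] of index [k - 3] combines the rows of [der_matrix]
   into [N] times the [k]-th unit row. *)
Definition elim_cert : seq (int * seq int) :=
  [:: (1, [:: -1; 0; 0; 0; 0; 0]);
      (2, [:: 0; -1; 0; 0; 0; 0]);
      (1, [:: 0; 2; 1; 0; 0; 0]);
      (3, [:: 0; 0; 0; -1; 0; 0]);
      (2, [:: 0; 0; 0; -1; 1; 0]);
      (4, [:: 0; 0; 0; 0; 0; -1])].

Definition elim_check : bool :=
  all (fun k => let: (N, lam) := nth (0, [::]) elim_cert (k - 3) in
    (N != 0) && all (fun i => isum 6 (fun e => nth 0 lam e * der_matrix e i) == N * (i == k)%:R)
                    (iota 0 9))
    (iota 3 6).

Lemma elim_checkP : elim_check. Proof. by vm_compute. Qed.

Lemma basis6_ker_coef (K : fieldType) (c : nat -> K) :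
  [pchar K] =i pred0 -> dcomb c (basis 6) = ncs_zero K ->
  forall k, (3 <= k < 9)%N -> c k = 0.
Proof.
move=> charK0 dc0 k /andP[le_3k lt_k9].
have := elim_checkP; rewrite /elim_check => /allP/(_ k); rewrite mem_iota => /(_ ltac:(lia)).
case: (nth _ elim_cert _) => N lam /andP[N_neq0 /allP lam_M].
apply: (coef_eq0_of_certificate (m := 6) (n := size (basis 6)) (M := der_matrix)
          (lam := fun e => nth 0 lam e) (N := N)) => //.
- exact: intr_pchar0_neq0.
- by move=> e _; apply: (congr1 (fun p => p (nth [::] test_words e)) dc0).
- move=> i lt_i9; have /lam_M : i \in iota 0 9 by rewrite mem_iota.
  by rewrite isumE => /eqP.
Qed.

Lemma lie_closure_lcomb (K : fieldType) (S : ncs K -> Prop) p0 (c : nat -> K) l :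
  S p0 -> (forall i, (i < size l)%N -> c i = 0 \/ lie_closure S (leval K (nth LX l i))) ->
  lie_closure S (lcomb c l).
Proof.
move=> S_p0 c_l.
apply: (ncs_sum_closed (P := lie_closure S)
  (F := fun i => ncs_scale (c i) (leval K (nth LX l i)))) => [|p q|i lt_il].
- exact: lie_closure0 S_p0.
- exact: lc_add.
case: (c_l i lt_il) => [-> | ?]; last exact: lc_scale.
by rewrite ncs_scale0; apply: lie_closure0 S_p0.
Qed.

Theorem proposition5p4 (K : fieldType) (charK0 : [pchar K]%R =i pred0)
  (delta : ncs K -> ncs K)
  (hder : lie_derivation delta)
  (hdx : delta (ncs_x K) = ncs_zero K) (hdy : delta (ncs_y K) = ncs_x K)
  (f : ncs K) (hfL : free_lie f) (hdeg : homog 6 f)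
  (hker : delta f = ncs_zero K) :
  let x := ncs_x K in
  let y := ncs_y K in
  let yx := ncs_br y x in
  lie_closure
    (fun p => p = x \/ p = yx \/ p = ncs_br (ncs_br yx y) (ncs_br yx x)) f.
Proof.
move=> x y yx; set S := (X in lie_closure X _).
have f_span : lspan (basis 6) f.
  suff -> : f = hcomp 6 f by apply: free_lie_hcomp.
  apply: functional_extensionality => w; rewrite /hcomp.
  by case: eqP => // /eqP w_6; rewrite hdeg.
have [c [f_c df]] := lspan_coef hder hdx hdy f_span.
have c_eq0 := basis6_ker_coef charK0 (etrans (esym df) hker).
rewrite f_c; apply: (lie_closure_lcomb (p0 := x)) => [|i lt_i9]; first by left.
have [le_3i | lt_i3] := leqP 3 i; first by left; apply: c_eq0; rewrite le_3i.
have x_gen : lie_closure S x by apply: lc_gen; left.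
have yx_gen : lie_closure S yx by apply: lc_gen; right; left.
right; case: i lt_i3 {lt_i9} => [|[|[|//]]] _.
- by do 4 (apply: lc_br => //).
- by do 3 (apply: lc_br => //).
- by apply: lc_gen; right; right.
Qed.
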